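(* Let $k\ge 2$ be an integer and suppose that every set of $k-1$ distinct positive integers has the LR property. Then every set $\{v_1,\ldots,v_k\}$ of $k$ distinct positive integers with $\gcd(v_1,\ldots,v_k)=1$ and \[ \prod_{i=1}^{k} v_i \ge \left[\frac{\binom{k+1}{2}^{k-1}}{k}\right]^k \] has the LR property.
   Context: For a real number $x$, $\|x\|$ denotes the distance from $x$ to the nearest integer. A finite set $S$ of $m$ integers has the LR (lonely runner) property if there exists a real $t$ such that $\|tv\|\ge \frac{1}{m+1}$ for all $v\in S$. The square brackets in the bound are ordinary brackets (not an integer-part function). *)

From Stdlib Require Import Reals List Arith.
Open Scope R_scope.

Definition frac_part (x : R) : R := x - IZR (Int_part x).
Definition dist_nint (x : R) : R := Rmin (frac_part x) (1 - frac_part x).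

(* A finite set of integers, given as a duplicate-free list S of size m, has the LR property. *)
Definition LR_property (S : list nat) : Prop :=
  exists t : R, forall v, In v S ->
    dist_nint (t * INR v) >= 1 / (INR (length S) + 1).

Fixpoint binom (n k : nat) : nat :=
  match n, k with
  | _, O => 1%nat
  | O, S _ => 0%nat
  | S n', S k' => (binom n' k' + binom n' k)%nat
  end.

Definition prodl (S : list nat) : nat := fold_right Nat.mul 1%nat S.
Definition gcdl (S : list nat) : nat := fold_right Nat.gcd 0%nat S.

(* By strict AM-GM on distinct integers, the bound on the product forces
   [v_1 + ... + v_k > C^(k-1)] with [C = binom (k+1) 2]. Along the line [t |-> t V],
   [t] in [[0,1)], the coordinates cross [C (v_1 + ... + v_k) > C^k] grid lines
   [1/C Z], more than there are cells of side [1/C] in the torus, so some cell is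
   visited at two crossing times [t1 < t2]: [t = t2 - t1] and integers [c_v] satisfy
   [|t v - c_v| < 1/C], and the ratios [c_v / v] are not all equal, since otherwise
   [t v] would be an integer for every [v] and [gcd V = 1] would make [t] an integer.
   Pick [i, j] with [c_i / i < c_j / j] and no ratio strictly between them. Then
   [u_v = (i + j) c_v - (c_i + c_j) v] never vanishes and [u_j = - u_i], so the [|u_v|]
   take at most [k - 1] values, and the hypothesis gives [lam] with
   [||lam u_v|| >= 1/k]. With [n] the integer nearest to [lam (i + j)] and
   [r = lam (i + j) - n], the time [r t - lam (c_i + c_j)] multiplies [v] to
   [lam u_v + r (t v - c_v)] modulo 1, which is at distance at least
   [1/k - 1/(2C) = 1/(k+1)] from the integers. *)

From Pilot Require Import Defs.
From Stdlib Require Import Reals List Arith.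
From Stdlib Require Import Lra Lia ZArith Classical FinFun.
Import ListNotations.
Open Scope R_scope.

Lemma Int_part_bounds x : IZR (Int_part x) <= x < IZR (Int_part x) + 1.
Proof. destruct (base_Int_part x); lra. Qed.

Lemma dist_nint_le x (n : Z) : dist_nint x <= Rabs (x - IZR n).
Proof.
  unfold dist_nint, Defs.frac_part.
  destruct (Int_part_bounds x) as [Hlo Hhi].
  destruct (Z_le_gt_dec n (Int_part x)) as [Hn | Hn].
  - apply IZR_le in Hn. rewrite Rabs_right by lra.
    apply Rle_trans with (1 := Rmin_l _ _). lra.
  - assert (Hn' : IZR (Int_part x) + 1 <= IZR n)
      by (rewrite <- plus_IZR; apply IZR_le; lia).
    rewrite Rabs_left1 by lra.
    apply Rle_trans with (1 := Rmin_r _ _). lra.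
Qed.

Lemma dist_nint_attained x : exists n : Z, dist_nint x = Rabs (x - IZR n).
Proof.
  unfold dist_nint, Defs.frac_part.
  destruct (Int_part_bounds x) as [Hlo Hhi].
  destruct (Rle_dec (x - IZR (Int_part x)) (1 - (x - IZR (Int_part x)))).
  - exists (Int_part x). rewrite Rmin_left, Rabs_right by lra. reflexivity.
  - exists (Int_part x + 1)%Z. rewrite Rmin_right, plus_IZR, Rabs_left1 by lra. lra.
Qed.

Lemma dist_nint_perturb x e (m : Z) : dist_nint (x + e + IZR m) >= dist_nint x - Rabs e.
Proof.
  destruct (dist_nint_attained (x + e + IZR m)) as [n ->].
  pose proof (dist_nint_le x (n - m)) as H. rewrite minus_IZR in H.
  pose proof (Rabs_triang (x + e + IZR m - IZR n) (- e)) as T.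
  rewrite Rabs_Ropp in T.
  replace (x + e + IZR m - IZR n + - e) with (x - (IZR n - IZR m)) in T by ring.
  lra.
Qed.

Lemma dist_nint_opp x : dist_nint (- x) = dist_nint x.
Proof.
  assert (H : forall y, dist_nint (- y) <= dist_nint y).
  { intros y. destruct (dist_nint_attained y) as [n ->].
    rewrite <- Rabs_Ropp.
    replace (- (y - IZR n)) with (- y - IZR (- n)) by (rewrite opp_IZR; ring).
    apply dist_nint_le. }
  apply Rle_antisym; [apply H |].
  rewrite <- (Ropp_involutive x) at 1. apply H.
Qed.

Lemma dist_nint_mul_abs s (z : Z) : dist_nint (s * IZR (Z.abs z)) = dist_nint (s * IZR z).
Proof.
  rewrite abs_IZR. destruct (Rle_dec 0 (IZR z)).
  - rewrite Rabs_right by lra. reflexivity.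
  - rewrite Rabs_left, <- dist_nint_opp by lra. f_equal. ring.
Qed.

Lemma nearest_integer x : exists n : Z, Rabs (x - IZR n) <= / 2.
Proof.
  exists (Int_part (x + / 2)). destruct (Int_part_bounds (x + / 2)).
  apply Rabs_le. lra.
Qed.

Definition Rlist_prod (l : list R) : R := fold_right Rmult 1 l.
Definition Rlist_sum (l : list R) : R := fold_right Rplus 0 l.

Lemma INR_prodl V : INR (prodl V) = Rlist_prod (map INR V).
Proof. induction V as [|v V IH]; simpl; [reflexivity|]. now rewrite mult_INR, IH. Qed.

Lemma INR_list_sum V : INR (list_sum V) = Rlist_sum (map INR V).
Proof. induction V as [|v V IH]; simpl; [reflexivity|]. now rewrite plus_INR, IH. Qed.

Lemma Rlist_prod_pos l : (forall x, In x l -> 0 < x) -> 0 < Rlist_prod l.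
Proof.
  induction l as [|a l IH]; simpl; intros H; [lra|].
  apply Rmult_lt_0_compat; [apply H; left | apply IH; intros; apply H; right]; auto.
Qed.

Lemma Rlist_sum_nonneg l : (forall x, In x l -> 0 <= x) -> 0 <= Rlist_sum l.
Proof.
  induction l as [|a l IH]; simpl; intros H; [lra|].
  apply Rplus_le_le_0_compat; [apply H; left | apply IH; intros; apply H; right]; auto.
Qed.

Lemma pow_succ_ge_tangent n x y : 0 <= x -> 0 <= y ->
  y ^ S n + INR (S n) * y ^ n * (x - y) <= x ^ S n.
Proof.
  intros Hx Hy. induction n as [|n IH]; [simpl; lra |].
  assert (Hsq : 0 <= INR (S n) * y ^ n * (x - y) ^ 2).
  { apply Rmult_le_pos; [apply Rmult_le_pos; [apply pos_INR | now apply pow_le] | apply pow2_ge_0]. }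
  assert (Hgap : 0 <= x * (x ^ S n - y ^ S n - INR (S n) * y ^ n * (x - y)))
    by (apply Rmult_le_pos; lra).
  assert (E : x ^ S (S n) - y ^ S (S n) - INR (S (S n)) * y ^ S n * (x - y)
              = x * (x ^ S n - y ^ S n - INR (S n) * y ^ n * (x - y))
                + INR (S n) * y ^ n * (x - y) ^ 2)
    by (rewrite !S_INR; simpl; ring).
  lra.
Qed.

Lemma mul_pow_le_mean_pow n a A : 0 <= a -> 0 <= A ->
  a * A ^ n <= ((a + INR n * A) / INR (S n)) ^ S n.
Proof.
  intros Ha HA.
  assert (Hn : 0 < INR (S n)) by apply lt_0_INR, Nat.lt_0_succ.
  set (B := (a + INR n * A) / INR (S n)).
  assert (HB : INR (S n) * B = a + INR n * A) by (unfold B; field; lra).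
  assert (HB0 : 0 <= B) by (unfold B; apply Rle_mult_inv_pos; [pose proof (pos_INR n); nra | lra]).
  pose proof (pow_succ_ge_tangent n B A HB0 HA) as H.
  replace (INR (S n) * A ^ n * (B - A)) with (A ^ n * (INR (S n) * B) - INR (S n) * A ^ S n)
    in H by (simpl; ring).
  rewrite HB, S_INR in H. simpl in *. lra.
Qed.

Lemma AM_GM (l : list R) : (forall x, In x l -> 0 <= x) ->
  Rlist_prod l <= (Rlist_sum l / INR (length l)) ^ length l.
Proof.
  induction l as [|a l IH]; intros Hl; [simpl; lra|].
  destruct l as [|b l]; [simpl; lra|].
  set (n := length (b :: l)).
  assert (Hn : 0 < INR n) by (apply lt_0_INR; unfold n; simpl; lia).
  set (A := Rlist_sum (b :: l) / INR n).
  assert (Ha : 0 <= a) by (apply Hl; left; reflexivity).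
  assert (Htail : forall x, In x (b :: l) -> 0 <= x) by (intros; apply Hl; right; assumption).
  assert (HA : 0 <= A) by (apply Rle_mult_inv_pos; [apply Rlist_sum_nonneg|]; assumption).
  change (a * Rlist_prod (b :: l) <= ((a + Rlist_sum (b :: l)) / INR (S n)) ^ S n).
  apply Rle_trans with (a * A ^ n).
  - apply Rmult_le_compat_l; [exact Ha | apply IH, Htail].
  - replace (Rlist_sum (b :: l)) with (INR n * A) by (unfold A; field; lra).
    apply mul_pow_le_mean_pow; assumption.
Qed.

(* Replacing two distinct entries by their mean strictly raises the product and keeps the sum. *)
Lemma prodl_lt_mean_pow V : NoDup V -> (2 <= length V)%nat ->
  (forall v, In v V -> (0 < v)%nat) ->
  INR (prodl V) < (INR (list_sum V) / INR (length V)) ^ length V.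
Proof.
  intros Hnd Hlen Hpos.
  destruct V as [|a [|b W]]; simpl in Hlen; try lia.
  assert (Hab : INR a <> INR b).
  { intros E. apply INR_eq in E. subst b. inversion Hnd. apply H1. left. reflexivity. }
  set (m := (INR a + INR b) / 2).
  assert (Hprod : 0 < Rlist_prod (map INR W)).
  { apply Rlist_prod_pos. intros x Hx. apply in_map_iff in Hx as [v [<- Hv]].
    apply lt_0_INR, Hpos. right; right; exact Hv. }
  assert (Ha : 0 < INR a) by (apply lt_0_INR, Hpos; left; reflexivity).
  assert (Hb : 0 < INR b) by (apply lt_0_INR, Hpos; right; left; reflexivity).
  assert (Hmean : INR a * INR b < m * m).
  { assert (Hsq : 0 < (INR a - INR b)²) by (apply Rsqr_pos_lt; lra).
    unfold m, Rsqr in *. nra. }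
  rewrite INR_prodl, INR_list_sum.
  apply Rlt_le_trans with (Rlist_prod (m :: m :: map INR W)).
  - simpl. rewrite <- !Rmult_assoc. apply Rmult_lt_compat_r; assumption.
  - replace (Rlist_sum (map INR (a :: b :: W))) with (Rlist_sum (m :: m :: map INR W))
      by (unfold m; simpl; field).
    replace (length (a :: b :: W)) with (length (m :: m :: map INR W))
      by (simpl; rewrite length_map; reflexivity).
    apply AM_GM. intros x [<- | [<- | Hx]]; [unfold m; lra | unfold m; lra |].
    apply in_map_iff in Hx as [v [<- _]]. apply pos_INR.
Qed.

Lemma list_sum_gt_of_prodl_ge V (M : R) : NoDup V -> (2 <= length V)%nat ->
  (forall v, In v V -> (0 < v)%nat) ->
  INR (prodl V) >= (M / INR (length V)) ^ length V -> M < INR (list_sum V).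
Proof.
  intros Hnd Hlen Hpos Hprod.
  pose proof (prodl_lt_mean_pow V Hnd Hlen Hpos) as Hlt.
  assert (Hk : 0 < INR (length V)) by (apply lt_0_INR; lia).
  destruct (Rlt_le_dec (M / INR (length V)) (INR (list_sum V) / INR (length V))) as [H | H].
  - apply (Rmult_lt_reg_r (/ INR (length V))); [apply Rinv_0_lt_compat |]; assumption.
  - assert (Hmean : 0 <= INR (list_sum V) / INR (length V))
      by (apply Rle_mult_inv_pos; [apply pos_INR | assumption]).
    pose proof (pow_incr _ _ (length V) (conj Hmean H)). lra.
Qed.

Lemma In_le_list_sum v V : In v V -> (v <= list_sum V)%nat.
Proof.
  induction V as [|w V IH]; simpl; [tauto|].
  intros [<- | Hv]; [| apply IH in Hv]; lia.
Qed.

Fixpoint words (n C : nat) : list (list nat) :=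
  match n with
  | O => [[]]
  | S n => flat_map (fun a => map (cons a) (words n C)) (seq 0 C)
  end.

Lemma length_words n C : length (words n C) = (C ^ n)%nat.
Proof.
  induction n as [|n IH]; [reflexivity|]. simpl.
  rewrite (flat_map_constant_length (c := (C ^ n)%nat)), length_seq; [lia|].
  intros a _. rewrite length_map. exact IH.
Qed.

Lemma In_words n C w : length w = n -> (forall a, In a w -> (a < C)%nat) -> In w (words n C).
Proof.
  revert w. induction n as [|n IH]; intros [|a w] Hlen Hw; simpl in Hlen; try lia.
  - left. reflexivity.
  - apply in_flat_map. exists a. split.
    + apply in_seq. specialize (Hw a (or_introl eq_refl)). lia.
    + apply in_map, IH; [lia | intros; apply Hw; right; assumption].
Qed.

Lemma pigeonhole {A B} (f : A -> B) (l : list A) (codom : list B) :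
  NoDup l -> (forall x, In x l -> In (f x) codom) -> (length codom < length l)%nat ->
  exists x y, In x l /\ In y l /\ x <> y /\ f x = f y.
Proof.
  intros Hnd Hcod Hlen. apply NNPP. intros Hno.
  assert (Hinj : NoDup (map f l)).
  { apply NoDup_map_NoDup_ForallPairs; [|exact Hnd].
    intros x y Hx Hy Hxy. apply NNPP. intros Hne. apply Hno. exists x, y. auto. }
  assert (Hincl : incl (map f l) codom).
  { intros b Hb. apply in_map_iff in Hb as [x [<- Hx]]. auto. }
  pose proof (NoDup_incl_length Hinj Hincl) as Hle. rewrite length_map in Hle. lia.
Qed.

Definition is_int (r : R) : Prop := exists z : Z, r = IZR z.

Lemma is_int_bezout (t : R) n m g : Nat.Bezout n m g ->
  is_int (t * INR n) -> is_int (t * INR m) -> is_int (t * INR g).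
Proof.
  intros [a [b E]] [zn Hn] [zm Hm].
  exists (Z.of_nat a * zn - Z.of_nat b * zm)%Z.
  apply (f_equal INR) in E. rewrite plus_INR, !mult_INR in E.
  rewrite minus_IZR, !mult_IZR, <- Hn, <- Hm, <- !INR_IZR_INZ.
  replace (INR g) with (INR a * INR n - INR b * INR m) by lra. ring.
Qed.

Lemma is_int_gcdl (t : R) V : (forall v, In v V -> is_int (t * INR v)) -> is_int (t * INR (gcdl V)).
Proof.
  induction V as [|v V IH]; intros H; simpl.
  - exists 0%Z. simpl. ring.
  - assert (Hv : is_int (t * INR v)) by (apply H; left; reflexivity).
    assert (HV : is_int (t * INR (gcdl V))) by (apply IH; intros; apply H; right; assumption).
    destruct (Nat.gcd_bezout v (gcdl V)) as [Hb | Hb].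
    + exact (is_int_bezout t _ _ _ Hb Hv HV).
    + exact (is_int_bezout t _ _ _ Hb HV Hv).
Qed.

Lemma Z_sub_eq_mul_div_of_mod_eq (a b n : Z) : n <> 0%Z -> (a mod n = b mod n)%Z ->
  (b - a = n * ((b - a) / n))%Z.
Proof.
  intros Hn E. apply Z_div_exact_full_2; [exact Hn |].
  rewrite Zminus_mod, E, Z.sub_diag. reflexivity.
Qed.

Lemma Rdiv_cross a b c d : b <> 0 -> d <> 0 -> a / b = c / d -> a * d = c * b.
Proof.
  intros Hb Hd E.
  replace a with (a / b * b) by (field; exact Hb).
  replace c with (c / d * d) by (field; exact Hd).
  rewrite E. ring.
Qed.

Section Dirichlet.

Variables C D : nat.

(* Dirichlet's box argument along the line [t |-> t v]: [phase v t] increases by [C v]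
   over [0, 1), equals [m] at [event_time v m], and its integer part mod [C] is the
   [cell] of [v]. The delay [v / (C D)] keeps distinct [v] from crossing integers
   simultaneously once [D] is large. *)
Definition phase (v : nat) (t : R) : R := INR C * INR v * t - INR (v * v) / INR D.

Definition event_time (v m : nat) : R := INR (v * v + m * D) / INR (C * D * v).

Definition cell (v : nat) (t : R) : nat := Z.to_nat (Int_part (phase v t) mod Z.of_nat C).

Definition turns (v : nat) (t1 t2 : R) : Z :=
  ((Int_part (phase v t2) - Int_part (phase v t1)) / Z.of_nat C)%Z.

Definition cells (V : list nat) (t : R) : list nat := map (fun v => cell v t) V.

Definition events (V : list nat) : list (nat * nat) :=
  flat_map (fun v => map (pair v) (seq 0 (C * v))) V.

Lemma In_events V v m : In (v, m) (events V) <-> In v V /\ (m < C * v)%nat.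
Proof.
  unfold events. rewrite in_flat_map. split.
  - intros [w [Hw Hwm]]. apply in_map_iff in Hwm as [m' [E Hm']]. injection E as -> ->.
    apply in_seq in Hm'. split; [assumption | lia].
  - intros [Hv Hm]. exists v. split; [assumption |]. apply in_map, in_seq. lia.
Qed.

Lemma NoDup_events V : NoDup V -> NoDup (events V).
Proof.
  induction 1 as [|v V Hv HV IH]; [constructor |].
  unfold events; simpl. apply NoDup_app; [| exact IH |].
  - apply Injective_map_NoDup; [intros a b E; injection E; auto | apply seq_NoDup].
  - intros [w m] Hwm Hwm'. apply in_map_iff in Hwm as [m' [E _]]. injection E as <- _.
    apply In_events in Hwm' as [Hw _]. contradiction.
Qed.

Lemma length_events V : length (events V) = (C * list_sum V)%nat.
Proof.
  induction V as [|v V IH]; [simpl; lia |].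
  unfold events in *; simpl. rewrite length_app, length_map, length_seq, IH. lia.
Qed.

Hypothesis HC : (0 < C)%nat.

Lemma phase_event_time v m : (0 < v)%nat -> (0 < D)%nat -> phase v (event_time v m) = INR m.
Proof.
  intros Hv HD. unfold phase, event_time.
  assert (0 < INR C) by (apply lt_0_INR; exact HC).
  assert (0 < INR D) by (apply lt_0_INR; exact HD).
  assert (0 < INR v) by (apply lt_0_INR; exact Hv).
  rewrite !plus_INR, !mult_INR. field. lra.
Qed.

Lemma event_time_range v m : (0 < v)%nat -> (v * v < D)%nat -> (m < C * v)%nat ->
  0 <= event_time v m < 1.
Proof.
  intros Hv HD Hm. unfold event_time.
  assert (Hden : 0 < INR (C * D * v)) by (apply lt_0_INR; nia).
  split.
  - apply Rle_mult_inv_pos; [apply pos_INR | exact Hden].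
  - apply (Rmult_lt_reg_r (INR (C * D * v))); [exact Hden |].
    unfold Rdiv. rewrite Rmult_assoc, Rinv_l, Rmult_1_r, Rmult_1_l by lra.
    apply lt_INR. nia.
Qed.

Lemma event_time_inj v m w n : (0 < v)%nat -> (0 < w)%nat ->
  (v * w * v < D)%nat -> (v * w * w < D)%nat ->
  event_time v m = event_time w n -> v = w /\ m = n.
Proof.
  intros Hv Hw Hvwv Hvww E. unfold event_time in E.
  assert (HD : (0 < D)%nat) by nia.
  assert (Hcross : ((v * v + m * D) * w = (w * w + n * D) * v)%nat).
  { assert (Hv' : 0 < INR (C * D * v)) by (apply lt_0_INR; nia).
    assert (Hw' : 0 < INR (C * D * w)) by (apply lt_0_INR; nia).
    apply Rdiv_cross in E; [| lra | lra].
    rewrite <- !mult_INR in E. apply INR_eq in E.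
    apply (Nat.mul_cancel_l _ _ (C * D)); lia. }
  (* [v w (v - w)] is a multiple of [D] smaller than [D] in absolute value *)
  assert (Hvw : v = w).
  { assert (HZ : (Z.of_nat v * Z.of_nat w * (Z.of_nat v - Z.of_nat w)
                  = Z.of_nat D * (Z.of_nat n * Z.of_nat v - Z.of_nat m * Z.of_nat w))%Z).
    { apply (f_equal Z.of_nat) in Hcross.
      rewrite !Nat2Z.inj_mul, !Nat2Z.inj_add, !Nat2Z.inj_mul in Hcross. lia. }
    set (X := (Z.of_nat n * Z.of_nat v - Z.of_nat m * Z.of_nat w)%Z) in HZ.
    destruct (Z.eq_dec X 0) as [H0 | H0].
    - rewrite H0, Z.mul_0_r in HZ. apply Z.mul_eq_0 in HZ as [HZ | HZ]; nia.
    - assert (Hsmall : (Z.abs (Z.of_nat v * Z.of_nat w * (Z.of_nat v - Z.of_nat w)) < Z.of_nat D)%Z).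
      { destruct (Nat.le_gt_cases w v); [rewrite Z.abs_eq | rewrite Z.abs_neq]; nia. }
      rewrite HZ, Z.abs_mul, (Z.abs_eq (Z.of_nat D)) in Hsmall; nia. }
  subst w. split; [reflexivity |].
  apply (Nat.mul_cancel_r _ _ (D * v)); lia.
Qed.

Lemma cells_in_words V t : In (cells V t) (words (length V) C).
Proof.
  apply In_words; [apply length_map |].
  intros a Ha. apply in_map_iff in Ha as [v [<- _]]. unfold cell.
  pose proof (Z.mod_pos_bound (Int_part (phase v t)) (Z.of_nat C)). lia.
Qed.

Lemma turns_spec v t1 t2 : cell v t1 = cell v t2 ->
  INR C * ((t2 - t1) * INR v - IZR (turns v t1 t2))
  = frac_part (phase v t2) - frac_part (phase v t1).
Proof.
  intros E. unfold cell in E.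
  pose proof (Z.mod_pos_bound (Int_part (phase v t1)) (Z.of_nat C)).
  pose proof (Z.mod_pos_bound (Int_part (phase v t2)) (Z.of_nat C)).
  apply Z2Nat.inj in E; [| lia | lia].
  apply (Z_sub_eq_mul_div_of_mod_eq _ _ (Z.of_nat C)) in E; [| lia].
  apply (f_equal IZR) in E. rewrite mult_IZR, <- INR_IZR_INZ, minus_IZR in E.
  unfold turns, frac_part. rewrite Rmult_minus_distr_l, <- E. unfold phase. ring.
Qed.

Lemma turns_approx v t1 t2 : cell v t1 = cell v t2 ->
  Rabs ((t2 - t1) * INR v - IZR (turns v t1 t2)) < 1 / INR C.
Proof.
  intros E.
  assert (HCR : 0 < INR C) by (apply lt_0_INR; exact HC).
  assert (Habs : Rabs (INR C * ((t2 - t1) * INR v - IZR (turns v t1 t2))) < 1).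
  { rewrite (turns_spec v t1 t2 E).
    destruct (base_fp (phase v t1)), (base_fp (phase v t2)). apply Rabs_def1; lra. }
  rewrite Rabs_mult, (Rabs_right (INR C)) in Habs by lra.
  apply (Rmult_lt_reg_l (INR C)); [exact HCR |].
  replace (INR C * (1 / INR C)) with 1 by (field; lra). exact Habs.
Qed.

(* At a crossing the phase is integral, so [turns] rounds [(t2 - t1) v] down if the
   crossing is at [t1] and up if it is at [t2]. *)
Lemma turns_le_of_crossing v m t1 t2 : phase v t1 = INR m -> cell v t1 = cell v t2 ->
  IZR (turns v t1 t2) <= (t2 - t1) * INR v.
Proof.
  intros Hm E. pose proof (turns_spec v t1 t2 E) as H.
  unfold frac_part in H at 2. rewrite Hm, Int_part_INR, <- INR_IZR_INZ in H.
  destruct (base_fp (phase v t2)).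
  assert (HCR : 0 < INR C) by (apply lt_0_INR; exact HC). nra.
Qed.

Lemma turns_ge_of_crossing v m t1 t2 : phase v t2 = INR m -> cell v t1 = cell v t2 ->
  (t2 - t1) * INR v <= IZR (turns v t1 t2).
Proof.
  intros Hm E. pose proof (turns_spec v t1 t2 E) as H.
  unfold frac_part in H at 1. rewrite Hm, Int_part_INR, <- INR_IZR_INZ in H.
  destruct (base_fp (phase v t1)).
  assert (HCR : 0 < INR C) by (apply lt_0_INR; exact HC). nra.
Qed.

Lemma approximation_of_collision V v1 v2 (m1 m2 : nat) t1 t2 :
  (forall v, In v V -> (0 < v)%nat) -> gcdl V = 1%nat -> In v1 V -> In v2 V ->
  0 <= t1 -> t1 < t2 -> t2 < 1 ->
  phase v1 t1 = INR m1 -> phase v2 t2 = INR m2 -> cells V t1 = cells V t2 ->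
  exists (t : R) (c : nat -> Z),
    (forall v, In v V -> Rabs (t * INR v - IZR (c v)) < 1 / INR C) /\
    exists a b, In a V /\ In b V /\ IZR (c a) / INR a < IZR (c b) / INR b.
Proof.
  intros Hpos Hgcd Hv1 Hv2 Ht1 Ht12 Ht2 Hm1 Hm2 Hcells.
  unfold cells in Hcells. rewrite map_ext_in_iff in Hcells.
  exists (t2 - t1), (fun v => turns v t1 t2). split.
  { intros v Hv. apply turns_approx, Hcells, Hv. }
  apply NNPP. intros Htriv.
  set (rho := fun v => IZR (turns v t1 t2) / INR v).
  assert (Hrho : forall v, In v V -> IZR (turns v t1 t2) = rho v * INR v).
  { intros v Hv. unfold rho. field. apply not_0_INR. specialize (Hpos v Hv). lia. }
  assert (Hconst : forall a b, In a V -> In b V -> rho b <= rho a).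
  { intros a b Ha Hb. apply Rnot_lt_le. intros Hlt. apply Htriv. exists a, b. auto. }
  assert (H1 : rho v1 <= t2 - t1).
  { apply (Rmult_le_reg_r (INR v1)); [apply lt_0_INR, Hpos, Hv1 |].
    rewrite <- (Hrho v1 Hv1). exact (turns_le_of_crossing v1 m1 t1 t2 Hm1 (Hcells v1 Hv1)). }
  assert (H2 : t2 - t1 <= rho v2).
  { apply (Rmult_le_reg_r (INR v2)); [apply lt_0_INR, Hpos, Hv2 |].
    rewrite <- (Hrho v2 Hv2). exact (turns_ge_of_crossing v2 m2 t1 t2 Hm2 (Hcells v2 Hv2)). }
  destruct (is_int_gcdl (t2 - t1) V) as [z Hz].
  { intros v Hv. exists (turns v t1 t2). rewrite (Hrho v Hv).
    pose proof (Hconst v1 v Hv1 Hv). pose proof (Hconst v v2 Hv Hv2).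
    replace (rho v) with (t2 - t1) by lra. reflexivity. }
  rewrite Hgcd, Rmult_1_r in Hz.
  assert (Hz01 : 0 < IZR z < 1) by lra.
  destruct Hz01 as [Hz0 Hz1]. apply lt_IZR in Hz0. apply lt_IZR in Hz1. lia.
Qed.

End Dirichlet.

Lemma simultaneous_approximation V C : NoDup V -> (forall v, In v V -> (0 < v)%nat) ->
  gcdl V = 1%nat -> (0 < C)%nat -> (C ^ length V < C * list_sum V)%nat ->
  exists (t : R) (c : nat -> Z),
    (forall v, In v V -> Rabs (t * INR v - IZR (c v)) < 1 / INR C) /\
    exists a b, In a V /\ In b V /\ IZR (c a) / INR a < IZR (c b) / INR b.
Proof.
  intros Hnd Hpos Hgcd HC Hcount.
  set (M := list_sum V).
  set (D := S (M * M * M)).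
  assert (HD : forall v w, In v V -> In w V -> (v * w * v < D)%nat).
  { intros v w Hv Hw. apply In_le_list_sum in Hv, Hw. unfold D.
    pose proof (Nat.mul_le_mono _ _ _ _ (Nat.mul_le_mono _ _ _ _ Hv Hw) Hv). lia. }
  destruct (pigeonhole (fun e => cells C D V (event_time C D (fst e) (snd e)))
               (events C V) (words (length V) C))
    as [[v1 m1] [[v2 m2] [He1 [He2 [Hne Hcol]]]]].
  - apply NoDup_events, Hnd.
  - intros e _. apply cells_in_words, HC.
  - rewrite length_words, length_events. exact Hcount.
  - apply In_events in He1 as [Hv1 Hm1], He2 as [Hv2 Hm2].
    assert (Hrange : forall v m, In v V -> (m < C * v)%nat -> 0 <= event_time C D v m < 1).
    { intros v m Hv Hm. specialize (HD v v Hv Hv). specialize (Hpos v Hv).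
      apply event_time_range; [exact HC | exact Hpos | nia | exact Hm]. }
    assert (Hphase : forall v m, In v V -> phase C D v (event_time C D v m) = INR m).
    { intros v m Hv. specialize (HD v v Hv Hv). apply phase_event_time; auto; lia. }
    pose proof (Hrange v1 m1 Hv1 Hm1). pose proof (Hrange v2 m2 Hv2 Hm2).
    simpl in Hcol.
    destruct (Rtotal_order (event_time C D v1 m1) (event_time C D v2 m2)) as [Hlt | [Heq | Hgt]].
    + apply (approximation_of_collision C D HC V v1 v2 m1 m2
               (event_time C D v1 m1) (event_time C D v2 m2)); auto; lra.
    + exfalso. apply Hne.
      destruct (event_time_inj C D HC v1 m1 v2 m2) as [-> ->]; auto.
      pose proof (HD v2 v1 Hv2 Hv1). lia.
    + apply (approximation_of_collision C D HC V v2 v1 m2 m1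
               (event_time C D v2 m2) (event_time C D v1 m1)); auto; lra.
Qed.

Lemma exists_min_above {A} (f : A -> R) (x : R) (L : list A) :
  (exists b, In b L /\ x < f b) ->
  exists j, In j L /\ x < f j /\ forall l, In l L -> x < f l -> f j <= f l.
Proof.
  induction L as [|y L IH]; intros [b [Hb Hxb]]; [destruct Hb |].
  destruct (classic (exists b, In b L /\ x < f b)) as [HL | HL].
  - destruct (IH HL) as [j [Hj [Hxj Hmin]]].
    destruct (Rlt_dec x (f y)) as [Hy | Hy]; [destruct (Rlt_dec (f y) (f j)) as [Hyj | Hyj] |].
    + exists y. split; [left; reflexivity | split; [exact Hy |]].
      intros l [<- | Hl] Hxl; [lra |]. specialize (Hmin l Hl Hxl). lra.
    + exists j. split; [right; exact Hj | split; [exact Hxj |]].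
      intros l [<- | Hl] Hxl; [lra | auto].
    + exists j. split; [right; exact Hj | split; [exact Hxj |]].
      intros l [<- | Hl] Hxl; [contradiction | auto].
  - destruct Hb as [<- | Hb]; [| exfalso; apply HL; eauto].
    exists y. split; [left; reflexivity | split; [exact Hxb |]].
    intros l [<- | Hl] Hxl; [lra | exfalso; apply HL; eauto].
Qed.

Lemma exists_gap {A} (f : A -> R) (L : list A) :
  (exists a b, In a L /\ In b L /\ f a < f b) ->
  exists i j, In i L /\ In j L /\ f i < f j /\ forall l, In l L -> f l <= f i \/ f j <= f l.
Proof.
  intros [a [b [Ha [Hb Hab]]]].
  destruct (exists_min_above f (f a) L) as [j [Hj [Haj Hmin]]]; [eauto |].
  exists a, j. repeat split; auto.
  intros l Hl. destruct (Rlt_le_dec (f a) (f l)); [right | left]; auto.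
Qed.

Lemma mediant_between a b c d : 0 < b -> 0 < d -> a / b < c / d ->
  a / b < (a + c) / (b + d) < c / d.
Proof.
  intros Hb Hd H.
  assert (Hq : 0 < d / (b + d) < 1).
  { split; [apply Rdiv_lt_0_compat; lra |].
    apply (Rmult_lt_reg_r (b + d)); [lra |]. field_simplify; lra. }
  replace ((a + c) / (b + d)) with (a / b + (c / d - a / b) * (d / (b + d)))
    by (field; lra).
  split; nra.
Qed.

Lemma mediant_cross_neq ci vi cj vj c v : 0 < vi -> 0 < vj -> 0 < v ->
  ci / vi < cj / vj -> c / v <= ci / vi \/ cj / vj <= c / v ->
  (vi + vj) * c - (ci + cj) * v <> 0.
Proof.
  intros Hvi Hvj Hv Hij Hgap E.
  destruct (mediant_between ci vi cj vj Hvi Hvj Hij) as [Hlo Hhi].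
  replace (c / v) with ((ci + cj) / (vi + vj)) in Hgap; [lra |].
  field_simplify_eq; [lra | split; lra].
Qed.

Lemma lonely_time_of_short_list (n : nat)
  (IH : forall S : list nat, NoDup S -> length S = n ->
        (forall v, In v S -> (0 < v)%nat) -> LR_property S)
  (T : list nat) : (forall v, In v T -> (0 < v)%nat) -> (length T <= n)%nat ->
  exists s : R, forall v, In v T -> dist_nint (s * INR v) >= 1 / (INR n + 1).
Proof.
  intros Hpos Hlen.
  set (T0 := nodup Nat.eq_dec T).
  assert (HT0 : (length T0 <= n)%nat).
  { apply Nat.le_trans with (length T); [| exact Hlen].
    apply NoDup_incl_length; [apply NoDup_nodup | intros v; apply nodup_In]. }
  set (M := list_max T0).
  assert (HM : forall v, In v T0 -> (v <= M)%nat).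
  { intros v Hv. pose proof (proj1 (list_max_le T0 M) (Nat.le_refl M)) as H.
    rewrite Forall_forall in H. exact (H v Hv). }
  set (S := T0 ++ seq (Datatypes.S M) (n - length T0)).
  destruct (IH S) as [s Hs].
  - apply NoDup_app; [apply NoDup_nodup | apply seq_NoDup |].
    intros v Hv Hv'. apply HM in Hv. apply in_seq in Hv'. lia.
  - unfold S. rewrite length_app, length_seq. lia.
  - intros v Hv. apply in_app_or in Hv as [Hv | Hv].
    + apply Hpos, (nodup_In Nat.eq_dec), Hv.
    + apply in_seq in Hv. lia.
  - exists s. intros v Hv.
    replace (INR n) with (INR (length S)) by (unfold S; rewrite length_app, length_seq; f_equal; lia).
    apply Hs, in_or_app. left. apply nodup_In, Hv.
Qed.

Lemma lonely_time_of_combination (V : list nat) (eps delta t lam : R) (c : nat -> Z)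
  (p : nat) (q : Z) :
  (forall v, In v V -> Rabs (t * INR v - IZR (c v)) <= delta) ->
  (forall v, In v V -> dist_nint (lam * (INR p * IZR (c v) - IZR q * INR v)) >= eps) ->
  exists s : R, forall v, In v V -> dist_nint (s * INR v) >= eps - delta / 2.
Proof.
  intros Happrox Hlam.
  destruct (nearest_integer (lam * INR p)) as [n Hn].
  set (r := lam * INR p - IZR n).
  exists (r * t - lam * IZR q). intros v Hv.
  replace ((r * t - lam * IZR q) * INR v)
    with (lam * (INR p * IZR (c v) - IZR q * INR v) + r * (t * INR v - IZR (c v))
          + IZR (- n * c v))
    by (rewrite mult_IZR, opp_IZR; unfold r; ring).
  eapply Rge_trans; [apply dist_nint_perturb |].
  assert (Hsmall : Rabs (r * (t * INR v - IZR (c v))) <= / 2 * delta).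
  { rewrite Rabs_mult. apply Rmult_le_compat; [apply Rabs_pos | apply Rabs_pos | exact Hn |].
    apply Happrox, Hv. }
  specialize (Hlam v Hv). lra.
Qed.

Lemma lonely_time_of_approximation (V : list nat) (eps delta t : R) (c : nat -> Z) :
  (forall v, In v V -> (0 < v)%nat) ->
  (forall T : list nat, (forall v, In v T -> (0 < v)%nat) -> (length T < length V)%nat ->
     exists s : R, forall v, In v T -> dist_nint (s * INR v) >= eps) ->
  (forall v, In v V -> Rabs (t * INR v - IZR (c v)) <= delta) ->
  (exists a b, In a V /\ In b V /\ IZR (c a) / INR a < IZR (c b) / INR b) ->
  exists s : R, forall v, In v V -> dist_nint (s * INR v) >= eps - delta / 2.
Proof.
  intros Hpos Hshort Happrox Hnontriv.
  assert (HVR : forall v, In v V -> 0 < INR v) by (intros; apply lt_0_INR; auto).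
  destruct (exists_gap (fun v => IZR (c v) / INR v) V Hnontriv)
    as [i [j [Hi [Hj [Hij Hgap]]]]].
  set (u := fun v => (Z.of_nat (i + j) * c v - (c i + c j) * Z.of_nat v)%Z).
  assert (Hu : forall v, IZR (u v) = INR (i + j) * IZR (c v) - IZR (c i + c j) * INR v).
  { intros v. unfold u. rewrite minus_IZR, !mult_IZR, <- !INR_IZR_INZ. reflexivity. }
  (* [u v = 0] would put [c v / v] at the mediant of [c i / i] and [c j / j], inside the gap *)
  assert (Hu0 : forall v, In v V -> u v <> 0%Z).
  { intros v Hv E. apply (f_equal IZR) in E. rewrite Hu, plus_INR, plus_IZR in E.
    exact (mediant_cross_neq _ _ _ _ _ _ (HVR i Hi) (HVR j Hj) (HVR v Hv) Hij (Hgap v Hv) E). }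
  assert (Hu_ji : Z.abs (u j) = Z.abs (u i)).
  { replace (u j) with (- u i)%Z by (unfold u; rewrite Nat2Z.inj_add; ring). apply Z.abs_opp. }
  set (T := map (fun v => Z.abs_nat (u v)) (remove Nat.eq_dec j V)).
  destruct (Hshort T) as [lam Hlam].
  { intros x Hx. apply in_map_iff in Hx as [v [<- Hv]]. apply in_remove in Hv as [Hv _].
    specialize (Hu0 v Hv). lia. }
  { unfold T. rewrite length_map. apply remove_length_lt, Hj. }
  apply (lonely_time_of_combination V eps delta t lam c (i + j) (c i + c j) Happrox).
  intros v Hv. rewrite <- Hu, <- dist_nint_mul_abs.
  destruct (Nat.eq_dec v j) as [-> | Hvj].
  - assert (Hij' : i <> j) by (intros ->; lra).
    rewrite Hu_ji, <- Nat2Z.inj_abs_nat, <- INR_IZR_INZ.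
    apply Hlam, in_map_iff. exists i. split; [reflexivity | apply in_in_remove; assumption].
  - rewrite <- Nat2Z.inj_abs_nat, <- INR_IZR_INZ.
    apply Hlam, in_map_iff. exists v. split; [reflexivity | apply in_in_remove; assumption].
Qed.

Lemma binom_1 n : binom n 1 = n.
Proof. induction n as [|n IH]; [reflexivity |]. destruct n; simpl in *; lia. Qed.

Lemma binom_2 n : (2 * binom (S n) 2 = S n * n)%nat.
Proof.
  induction n as [|n IH]; [reflexivity |].
  change (binom (S (S n)) 2) with (binom (S n) 1 + binom (S n) 2)%nat.
  rewrite binom_1. lia.
Qed.

Theorem corollary2 (k : nat) (hk : (2 <= k)%nat)
  (IH : forall S : list nat, NoDup S -> length S = (k - 1)%nat ->
        (forall v, In v S -> (0 < v)%nat) -> LR_property S) :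
  forall V : list nat, NoDup V -> length V = k ->
    (forall v, In v V -> (0 < v)%nat) ->
    gcdl V = 1%nat ->
    INR (prodl V) >= (INR (binom (k + 1) 2) ^ (k - 1) / INR k) ^ k ->
    LR_property V.
Proof.
  intros V Hnd Hlen Hpos Hgcd Hprod.
  set (C := binom (k + 1) 2) in *.
  assert (HC : (2 * C = k * (k + 1))%nat) by (unfold C; rewrite Nat.add_1_r, binom_2; lia).
  assert (HCR : INR C = INR k * (INR k + 1) / 2).
  { apply (f_equal INR) in HC. rewrite !mult_INR, plus_INR in HC. simpl in HC. lra. }
  assert (HkR : 0 < INR k) by (apply lt_0_INR; lia).
  assert (Hsum : (C ^ (k - 1) < list_sum V)%nat).
  { apply INR_lt. rewrite pow_INR.
    apply list_sum_gt_of_prodl_ge; [exact Hnd | lia | exact Hpos | rewrite Hlen; exact Hprod]. }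
  destruct (simultaneous_approximation V C Hnd Hpos Hgcd) as [t [c [Happrox Hnontriv]]].
  { nia. }
  { rewrite Hlen. replace k with (S (k - 1)) at 1 by lia. rewrite Nat.pow_succ_r'. nia. }
  destruct (lonely_time_of_approximation V (1 / INR k) (1 / INR C) t c) as [s Hs];
    [exact Hpos | | | exact Hnontriv |].
  - intros T HT HlenT.
    replace (INR k) with (INR (k - 1) + 1) by (rewrite minus_INR by lia; simpl; ring).
    apply (lonely_time_of_short_list (k - 1) IH T HT). lia.
  - intros v Hv. apply Rlt_le, Happrox, Hv.
  - exists s. intros v Hv. rewrite Hlen.
    replace (1 / (INR k + 1)) with (1 / INR k - 1 / INR C / 2) by (rewrite HCR; field; lra).
    apply Hs, Hv.
Qed.
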